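(* Every flexible C-loop is diassociative. In particular, every commutative C-loop is diassociative.
   Context: A C-loop is a loop satisfying $x(y(yz))=((xy)y)z$ for all $x,y,z$. A loop is flexible if $(xy)x=x(yx)$ for all $x,y$. A loop is diassociative if every subloop generated by two elements is a group. *)

(* A loop: a quasigroup (with left/right divisions, equational axioms
   equivalent to unique solvability of a*x=b and y*a=b) with a two-sided
   identity element. *)
Record loop (T : Type) := Loop {
  lmul : T -> T -> T;
  lldiv : T -> T -> T;
  lrdiv : T -> T -> T;   (* lrdiv y x = y / x, the unique z with z*x = y *)
  lone : T;
  lmul_ldiv : forall x y, lmul x (lldiv x y) = y;
  lldiv_mul : forall x y, lldiv x (lmul x y) = y;
  lrdiv_mul : forall x y, lmul (lrdiv y x) x = y;
  lmul_rdiv : forall x y, lrdiv (lmul y x) x = y;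
  lone_mul : forall x, lmul lone x = x;
  lmul_one : forall x, lmul x lone = x
}.

Arguments lmul {T} l _ _.
Arguments lldiv {T} l _ _.
Arguments lrdiv {T} l _ _.
Arguments lone {T} l.

Definition C_loop {T} (L : loop T) : Prop :=
  forall x y z, lmul L x (lmul L y (lmul L y z)) = lmul L (lmul L (lmul L x y) y) z.

Definition flexible {T} (L : loop T) : Prop :=
  forall x y, lmul L (lmul L x y) x = lmul L x (lmul L y x).

Definition commutative_loop {T} (L : loop T) : Prop :=
  forall x y, lmul L x y = lmul L y x.

Inductive gen2 {T} (L : loop T) (a b : T) : T -> Prop :=
  | gen2_a : gen2 L a b a
  | gen2_b : gen2 L a b b
  | gen2_one : gen2 L a b (lone L)
  | gen2_mul : forall x y, gen2 L a b x -> gen2 L a b y -> gen2 L a b (lmul L x y)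
  | gen2_ldiv : forall x y, gen2 L a b x -> gen2 L a b y -> gen2 L a b (lldiv L x y)
  | gen2_rdiv : forall x y, gen2 L a b x -> gen2 L a b y -> gen2 L a b (lrdiv L x y).

(* Diassociative: every subloop generated by two elements is a group, i.e.
   (being a subloop) its multiplication is associative. *)
Definition diassociative {T} (L : loop T) : Prop :=
  forall a b x y z, gen2 L a b x -> gen2 L a b y -> gen2 L a b z ->
    lmul L (lmul L x y) z = lmul L x (lmul L y z).

From Stdlib Require Import Setoid.

(* In a C-loop every square lies in the nucleus N, the loop has the two-sided
   inverse property, N is normal and L/N has exponent 2; in particular
   b a = n (a b) for some n in N.  Hence the subloop generated by a and b lies
   in N {1, a, b, ab}.  Nuclear factors can be pulled out of any product, so
   associativity there reduces to triples of the words 1, a, b, ab, which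
   follows from the alternative laws, the inverse property and flexibility.
   Commutative loops are flexible. *)

Section Loop.
Variables (T : Type) (L : loop T).
Local Notation "x * y" := (lmul L x y).
Local Notation e := (lone L).

Definition inv x := lldiv L x e.
Local Notation "x ^-1" := (inv x) (at level 3, left associativity, format "x ^-1").

Definition nuclear n := forall x y,
  (n * x) * y = n * (x * y) /\ (x * n) * y = x * (n * y) /\ (x * y) * n = x * (y * n).

Definition associates x y z := (x * y) * z = x * (y * z).

Lemma mulgV x : x * x^-1 = e.
Proof. apply lmul_ldiv. Qed.

Lemma nuclearL {n} : nuclear n -> forall x y, (n * x) * y = n * (x * y).
Proof. intros Hn x y; apply Hn. Qed.

Lemma nuclearM {n} : nuclear n -> forall x y, (x * n) * y = x * (n * y).
Proof. intros Hn x y; apply Hn. Qed.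

Lemma nuclearR {n} : nuclear n -> forall x y, (x * y) * n = x * (y * n).
Proof. intros Hn x y; apply Hn. Qed.

Lemma nuclear_one : nuclear e.
Proof. intros x y. rewrite !lone_mul, !lmul_one. auto. Qed.

Lemma nuclear_mul n k : nuclear n -> nuclear k -> nuclear (n * k).
Proof.
  intros Hn Hk x y. split; [|split].
  - rewrite !(nuclearL Hn), (nuclearL Hk), <- (nuclearL Hn). reflexivity.
  - rewrite <- (nuclearM Hn), (nuclearM Hk), (nuclearM Hn), (nuclearL Hn).
    reflexivity.
  - rewrite <- (nuclearM Hn (x * y) k), <- (nuclearM Hn y k), (nuclearR Hn),
      (nuclearR Hk).
    reflexivity.
Qed.

Lemma associates_onel y z : associates e y z.
Proof. unfold associates. rewrite !lone_mul. reflexivity. Qed.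

Lemma associates_onem x z : associates x e z.
Proof. unfold associates. rewrite lone_mul, lmul_one. reflexivity. Qed.

Lemma associates_oner x y : associates x y e.
Proof. unfold associates. rewrite !lmul_one. reflexivity. Qed.

Lemma associates_nuclearl n x y z :
  nuclear n -> associates x y z -> associates (n * x) y z.
Proof.
  unfold associates; intros Hn Hxyz.
  rewrite !(nuclearL Hn), Hxyz. reflexivity.
Qed.

Lemma commutative_flexible : commutative_loop L -> flexible L.
Proof. intros Hcomm x y. rewrite (Hcomm (x * y) x), (Hcomm y x). reflexivity. Qed.

Section CLoop.
Hypothesis HC : C_loop L.

Lemma alternative_l x y : x * (x * y) = (x * x) * y.
Proof. generalize (HC e x y). rewrite !lone_mul. auto. Qed.

Lemma alternative_r x y : x * (y * y) = (x * y) * y.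
Proof. generalize (HC x y e). rewrite !lmul_one. auto. Qed.

Lemma sq_middle x y z : x * ((y * y) * z) = (x * (y * y)) * z.
Proof. rewrite <- alternative_l, alternative_r. apply HC. Qed.

Lemma mulgK x y : (x * y) * y^-1 = x.
Proof.
  assert (Hy : forall u, ((u * y) * y) * y^-1 = u * y).
  { intro u. rewrite <- alternative_r, <- sq_middle, <- alternative_l, mulgV,
      lmul_one.
    reflexivity. }
  generalize (Hy (lrdiv L x y)). rewrite lrdiv_mul. auto.
Qed.

Lemma mulVg x : x^-1 * x = e.
Proof.
  generalize (mulgK (lrdiv L e x) x). rewrite lrdiv_mul, lone_mul.
  intros ->. apply lrdiv_mul.
Qed.

Lemma mulKg x y : x^-1 * (x * y) = y.
Proof.
  assert (Hx : forall u, x^-1 * (x * (x * u)) = x * u).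
  { intro u. rewrite alternative_l, sq_middle, alternative_r, mulVg, lone_mul.
    reflexivity. }
  generalize (Hx (lldiv L x y)). rewrite lmul_ldiv. auto.
Qed.

Lemma invgK x : (x^-1)^-1 = x.
Proof. unfold inv at 1. rewrite <- (mulVg x). apply lldiv_mul. Qed.

Lemma mulgKV x y : (x * y^-1) * y = x.
Proof. rewrite <- (invgK y) at 2. apply mulgK. Qed.

Lemma mulKVg x y : x * (x^-1 * y) = y.
Proof. rewrite <- (invgK x) at 1. apply mulKg. Qed.

Lemma invMg x y : (x * y)^-1 = y^-1 * x^-1.
Proof.
  generalize (mulgK (x^-1) (x * y)). rewrite mulKg. intros <-.
  rewrite mulKg. reflexivity.
Qed.

Lemma ldivE x y : lldiv L x y = x^-1 * y.
Proof. rewrite <- (mulKVg x y) at 1. apply lldiv_mul. Qed.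

Lemma rdivE x y : lrdiv L y x = y * x^-1.
Proof. rewrite <- (mulgKV y x) at 1. apply lmul_rdiv. Qed.

Lemma sq_nuclear y : nuclear (y * y).
Proof.
  assert (Hsq : (y * y)^-1 = y^-1 * y^-1) by apply invMg.
  intros x z. split; [|split].
  - assert (Hz : ((y * y) * x)^-1 * ((y * y) * (x * z)) = z).
    { rewrite invMg, Hsq, <- sq_middle, <- Hsq, !mulKg. reflexivity. }
    rewrite <- Hz at 1. apply mulKVg.
  - symmetry. apply sq_middle.
  - assert (Hx : ((x * z) * (y * y)) * (z * (y * y))^-1 = x).
    { rewrite invMg, Hsq, sq_middle, <- Hsq, !mulgK. reflexivity. }
    rewrite <- Hx at 2. symmetry. apply mulgKV.
Qed.

Lemma nuclear_inv n : nuclear n -> nuclear n^-1.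
Proof.
  intros Hn x y. split; [|split].
  - rewrite <- (mulKVg n x) at 2. rewrite (nuclearL Hn), mulKg. reflexivity.
  - rewrite <- (mulgKV x n) at 2. rewrite (nuclearM Hn), mulKVg. reflexivity.
  - rewrite <- (mulgKV y n) at 1. rewrite <- (nuclearR Hn), mulgK. reflexivity.
Qed.

(* The conjugate (x n) x^-1 equals (x n)^2 n^-1 (x^-1)^2, a product of
   nuclear elements. *)
Lemma nuclear_normal x {n} : nuclear n -> exists n', nuclear n' /\ x * n = n' * x.
Proof.
  intro Hn. exists ((x * n) * x^-1). split; [|symmetry; apply mulgKV].
  assert (Hconj : (x * n) * x^-1 = (x * (n * x)) * (x^-1 * x^-1)).
  { rewrite <- (nuclearM Hn), (nuclearR (sq_nuclear x^-1)), mulKVg.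
    reflexivity. }
  assert (Hxnx : x * (n * x) = ((x * n) * (x * n)) * n^-1).
  { rewrite (nuclearM Hn x (x * n)), <- (nuclearL Hn x n),
      <- (nuclearR Hn x (n * x)), mulgK.
    reflexivity. }
  rewrite Hconj, Hxnx.
  apply nuclear_mul; [apply nuclear_mul|]; auto using sq_nuclear, nuclear_inv.
Qed.

Lemma associates_nuclearm n x y z :
  nuclear n -> associates x y z -> associates x (n * y) z.
Proof.
  unfold associates; intros Hn Hxyz.
  destruct (nuclear_normal x Hn) as [n' [Hn' Exn]].
  rewrite <- (nuclearM Hn x y), Exn, !(nuclearL Hn'), (nuclearL Hn y z),
    <- (nuclearM Hn x (y * z)), Exn, (nuclearL Hn'), Hxyz.
  reflexivity.
Qed.

Lemma associates_nuclearr n x y z :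
  nuclear n -> associates x y z -> associates x y (n * z).
Proof.
  unfold associates; intros Hn Hxyz.
  destruct (nuclear_normal y Hn) as [n' [Hn' Eyn]].
  destruct (nuclear_normal x Hn') as [n'' [Hn'' Exn']].
  assert (Exyn : (x * y) * n = n'' * (x * y)).
  { rewrite (nuclearR Hn x y), Eyn, <- (nuclearM Hn' x y), Exn', (nuclearL Hn'').
    reflexivity. }
  rewrite <- (nuclearM Hn (x * y) z), Exyn, (nuclearL Hn''), <- (nuclearM Hn y z),
    Eyn, (nuclearL Hn' y z), <- (nuclearM Hn' x (y * z)), Exn', (nuclearL Hn''),
    Hxyz.
  reflexivity.
Qed.

(* (y x) (x y)^-1 = (y x) (y^-1)^2 (y x) (x^-1)^2, and normality moves the
   square (y^-1)^2 to the front. *)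
Lemma commutator_nuclear x y : exists n, nuclear n /\ y * x = n * (x * y).
Proof.
  destruct (nuclear_normal (y * x) (sq_nuclear y^-1)) as [c [Hc Ec]].
  exists ((y * x) * (x * y)^-1). split; [|symmetry; apply mulgKV].
  assert (Ey : y^-1 = (y^-1 * y^-1) * y) by (symmetry; apply mulgKV).
  assert (Ex : x^-1 = x * (x^-1 * x^-1)) by (symmetry; apply mulKVg).
  assert (Hcomm : (y * x) * (x * y)^-1
                  = c * (((y * x) * (y * x)) * (x^-1 * x^-1))).
  { rewrite invMg, Ey at 1. rewrite Ex at 1.
    rewrite (nuclearL (sq_nuclear y^-1) y), <- (nuclearR (sq_nuclear x^-1) y x),
      <- (nuclearM (sq_nuclear y^-1) (y * x)), Ec, (nuclearL Hc (y * x)),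
      <- (nuclearR (sq_nuclear x^-1) (y * x) (y * x)).
    reflexivity. }
  rewrite Hcomm. auto using nuclear_mul, sq_nuclear.
Qed.

Lemma associates_sq_l x y : associates x x y.
Proof. symmetry. apply alternative_l. Qed.

Lemma associates_sq_r x y : associates x y y.
Proof. symmetry. apply alternative_r. Qed.

Lemma associates_mul_r x y : associates x y (x * y).
Proof.
  rewrite <- (mulgK (x * y) (x * y)).
  apply associates_nuclearr; [apply sq_nuclear|]. unfold associates.
  rewrite mulgV, invMg, mulKVg, mulgV. reflexivity.
Qed.

Lemma associates_mul_l x y : associates (x * y) x y.
Proof.
  rewrite <- (mulgK (x * y) (x * y)).
  apply associates_nuclearl; [apply sq_nuclear|]. unfold associates.
  rewrite mulVg, invMg, mulgKV, mulVg. reflexivity.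
Qed.

Lemma associates_mul_m x y : associates x (x * y) y.
Proof.
  unfold associates. rewrite alternative_l, <- !alternative_r, <- alternative_l.
  reflexivity.
Qed.

Section Words.
Variables a b : T.

Definition word w := w = e \/ w = a \/ w = b \/ w = a * b.

Definition nuclear_word x := exists n w, nuclear n /\ word w /\ x = n * w.

Lemma associates_word x y z :
  flexible L -> word x -> word y -> word z -> associates x y z.
Proof.
  intros HF Hx Hy Hz.
  destruct (commutator_nuclear b a) as [n [Hn Eab]].
  destruct Hx as [-> | [-> | [-> | ->]]]; try apply associates_onel;
  destruct Hy as [-> | [-> | [-> | ->]]]; try apply associates_onem;
  destruct Hz as [-> | [-> | [-> | ->]]]; try apply associates_oner;
  (* Flexibility settles the triples of the form (x, y, x). *)
  try apply associates_sq_l; try apply associates_sq_r; try apply HF;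
  try apply associates_mul_r; try apply associates_mul_l;
  try apply associates_mul_m;
  rewrite Eab; auto using associates_nuclearl, associates_nuclearm,
    associates_nuclearr, associates_mul_l, associates_mul_m, associates_mul_r.
Qed.

Lemma nuclear_word_word w : word w -> nuclear_word w.
Proof.
  intro Hw. exists e, w. split; [apply nuclear_one|]. split; [exact Hw|].
  symmetry. apply lone_mul.
Qed.

Lemma nuclear_word_nuclear n : nuclear n -> nuclear_word n.
Proof.
  intro Hn. exists n, e. split; [exact Hn|]. split; [left; reflexivity|].
  symmetry. apply lmul_one.
Qed.

Lemma nuclear_word_nuclear_mul n x :
  nuclear n -> nuclear_word x -> nuclear_word (n * x).
Proof.
  intros Hn [k [w [Hk [Hw ->]]]]. exists (n * k), w.
  split; [apply nuclear_mul; assumption|]. split; [exact Hw|].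
  symmetry. apply nuclearL, Hn.
Qed.

Lemma nuclear_word_mul_word v w : word v -> word w -> nuclear_word (v * w).
Proof.
  assert (Ha : word a) by (unfold word; tauto).
  assert (Hb : word b) by (unfold word; tauto).
  assert (Hab : word (a * b)) by (unfold word; tauto).
  intros Hv Hw.
  destruct Hv as [-> | [-> | [-> | ->]]];
    [rewrite lone_mul; apply nuclear_word_word; exact Hw | | |];
  destruct Hw as [-> | [-> | [-> | ->]]];
    try (rewrite lmul_one; apply nuclear_word_word; assumption);
    try (apply nuclear_word_nuclear, sq_nuclear).
  - apply nuclear_word_word, Hab.
  - rewrite alternative_l. auto using nuclear_word_nuclear_mul, sq_nuclear,
      nuclear_word_word.
  - destruct (commutator_nuclear a b) as [n [Hn ->]].
    auto using nuclear_word_nuclear_mul, nuclear_word_word.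
  - destruct (commutator_nuclear (a * b) b) as [n [Hn ->]].
    rewrite <- alternative_r.
    destruct (nuclear_normal a (sq_nuclear b)) as [n' [Hn' ->]].
    auto using nuclear_word_nuclear_mul, nuclear_word_word.
  - destruct (commutator_nuclear a (a * b)) as [n [Hn ->]].
    rewrite alternative_l.
    auto using nuclear_word_nuclear_mul, sq_nuclear, nuclear_word_word.
  - rewrite <- alternative_r.
    destruct (nuclear_normal a (sq_nuclear b)) as [n' [Hn' ->]].
    auto using nuclear_word_nuclear_mul, nuclear_word_word.
Qed.

Lemma nuclear_word_mul x y :
  nuclear_word x -> nuclear_word y -> nuclear_word (x * y).
Proof.
  intros [n [v [Hn [Hv ->]]]] [k [w [Hk [Hw ->]]]].
  destruct (nuclear_normal v Hk) as [k' [Hk' Evk]].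
  rewrite (nuclearL Hn), <- (nuclearM Hk), Evk, (nuclearL Hk').
  auto using nuclear_word_nuclear_mul, nuclear_word_mul_word.
Qed.

Lemma nuclear_word_inv x : nuclear_word x -> nuclear_word x^-1.
Proof.
  intros [n [w [Hn [Hw ->]]]].
  rewrite invMg. apply nuclear_word_mul.
  - rewrite <- (mulgKV w^-1 w).
    auto using nuclear_word_nuclear_mul, sq_nuclear, nuclear_word_word.
  - auto using nuclear_word_nuclear, nuclear_inv.
Qed.

Lemma gen2_nuclear_word x : gen2 L a b x -> nuclear_word x.
Proof.
  induction 1; try (apply nuclear_word_word; unfold word; tauto);
    rewrite ?ldivE, ?rdivE; auto using nuclear_word_mul, nuclear_word_inv.
Qed.

Lemma associates_nuclear_word x y z : flexible L ->
  nuclear_word x -> nuclear_word y -> nuclear_word z -> associates x y z.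
Proof.
  intros HF [n [u [Hn [Hu ->]]]] [k [v [Hk [Hv ->]]]] [m [w [Hm [Hw ->]]]].
  auto using associates_nuclearl, associates_nuclearm, associates_nuclearr,
    associates_word.
Qed.

End Words.

Lemma flexible_diassociative : flexible L -> diassociative L.
Proof.
  intros HF a b x y z Hx Hy Hz.
  apply (associates_nuclear_word a b); auto using gen2_nuclear_word.
Qed.

End CLoop.
End Loop.

Theorem lemma4p4 :
  forall (T : Type) (L : loop T),
    (C_loop L -> flexible L -> diassociative L) /\
    (C_loop L -> commutative_loop L -> diassociative L).
Proof.
  intros T L. split.
  - apply flexible_diassociative.
  - intros HC Hcomm. auto using flexible_diassociative, commutative_flexible.
Qed.
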